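(* Let $G$ be the $m\times n$ square lattice graph $P_m\times P_n$ with $m,n>2$ and $\{m,n\}\notin\{\{3,3\},\{3,5\},\{4,4\}\}$. Then $T_1(G)=4$.
   Context: $P_m\times P_n$ is the Cartesian product of paths on $m$ and $n$ vertices. Fix a set $\Sigma$ of symbols (bond-edge types) and a disjoint copy $\hat\Sigma=\{\hat a:a\in\Sigma\}$ with $\hat{\hat a}=a$; elements of $\Sigma\cup\hat\Sigma$ are cohesive-end types. A tile is a finite multiset of cohesive-end types. A pot is a finite set $P$ of tiles such that whenever $x$ occurs in a tile of $P$, $\hat x$ occurs in some tile of $P$; $\#P$ is its number of tiles. Graphs are finite, loops and multiple edges allowed. An assembly design of a graph $H$ labels the half-edges of $H$ by cohesive-end types so that the two half-edges of each edge receive complementary labels $x,\hat x$; $t_v$ is the multiset of labels at $v$, $P_\lambda(H)=\{t_v\}$, and $P$ realizes $H$ ($H\in\mathcal{O}(P)$) if some assembly design $\lambda$ has $P_\lambda(H)\subseteq P$. $T_1(G)=\min\{\#P: G\in\mathcal{O}(P)\}$. *)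

From mathcomp Require Import all_boot.
From mathcomp Require Import finmap multiset.
Set Implicit Arguments. Unset Strict Implicit. Unset Printing Implicit Defensive.

Local Open Scope fset_scope.
Local Open Scope mset_scope.
Local Open Scope nat_scope.

(* Bond-edge types Sigma := nat (a countably infinite supply of symbols).
   A cohesive-end type is a pair (a, b): b = false means a, b = true means hat a. *)
Definition cet := (nat * bool)%type.
Definition hat (x : cet) : cet := (x.1, ~~ x.2).

Notation tile := {mset cet}.

Definition is_pot (P : {fset tile}) : Prop :=
  forall t : tile, t \in P -> forall x : cet, x \in t -> exists2 t' : tile, t' \in P & hat x \in t'.

(* Graphs here are simple graphs: a symmetric irreflexive relation on a finType.
   Half-edges are the ordered pairs (v,u) with e v u (the half of edge {u,v} at v). *)
Definition simple_graph (T : finType) (e : rel T) : Prop :=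
  irreflexive e /\ symmetric e.

Definition assembly_design (T : finType) (e : rel T) (lam : T -> T -> cet) : Prop :=
  forall u v, e u v -> lam v u = hat (lam u v).

Definition tile_at (T : finType) (e : rel T) (lam : T -> T -> cet) (v : T) : tile :=
  seq_mset [seq lam v u | u <- enum T & e v u].

Definition realizes (T : finType) (e : rel T) (P : {fset tile}) : Prop :=
  exists lam, assembly_design e lam /\ forall v, tile_at e lam v \in P.

Definition T1_eq (T : finType) (e : rel T) (k : nat) : Prop :=
  (exists P, [/\ is_pot P, realizes e P & #|` P| = k]) /\
  (forall P, is_pot P -> realizes e P -> k <= #|` P|).

Definition path_adj n (i j : 'I_n) : bool := (i.+1 == j :> nat) || (j.+1 == i :> nat).

Definition grid_adj m n : rel ('I_m * 'I_n) :=
  fun x y => ((x.1 == y.1) && path_adj x.2 y.2) || ((x.2 == y.2) && path_adj x.1 y.1).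

(* Four tiles suffice: one bond type on the boundary cycle, oriented around it, and a second one
   on all other edges, oriented downwards and rightwards.

   Conversely, in a pot with at most three tiles the tile at a vertex is determined by its degree,
   so the corners, the sides and the p x q inner vertices of the grid carry tiles t2, t3 and t4.
   Every edge has one end x and one end hat x, so the imbalances d_i(x) = t_i(x) - t_i(hat x)
   satisfy 4 d2 + 2 (p + q) d3 + p q d4 = 0.  Summed over the bond types, |d_i| has the parity of
   size t_i, and is at most size t_i - 2 when t_i contains a complementary pair, as t3 and t4 must
   (two adjacent side vertices, two adjacent inner vertices).  Outside the excluded sizes this
   leaves only the 4 x 8 grid, with t2 = {a, a} and t3 = {a, a, hat a}, and there the path
   corner-side-side-corner along a short side cannot be labelled. *)

From mathcomp Require Import all_boot ssralg ssrnum ssrint.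
From mathcomp Require Import finmap multiset zify ring.
Set Implicit Arguments. Unset Strict Implicit. Unset Printing Implicit Defensive.
Import GRing.Theory Num.Theory.

Local Open Scope nat_scope.

Lemma hatK : involutive hat.
Proof. by case=> k []. Qed.

Lemma hat_neq x : hat x != x.
Proof. by case: x => k []; rewrite /hat xpair_eqE /= eqxx. Qed.

Lemma mem_seq_mset (s : seq cet) x : (x \in seq_mset s) = (x \in s).
Proof. by rewrite in_mset mset_seqE -has_count has_pred1. Qed.

Section AssemblyDesign.
Variables (T : finType) (e : rel T) (lam : T -> T -> cet).

Lemma tile_atE v x : tile_at e lam v x = \sum_u (e v u && (lam v u == x)).
Proof.
rewrite mset_seqE count_map count_filter -sum1_count big_mkcond /= big_enum.
by apply: eq_bigr => u _; rewrite andbC; case: ifP.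
Qed.

Lemma mem_tile_at v u : e v u -> lam v u \in tile_at e lam v.
Proof. by move=> evu; rewrite mem_seq_mset map_f // mem_filter evu mem_enum. Qed.

Lemma tile_atP v x : x \in tile_at e lam v -> exists2 u, e v u & x = lam v u.
Proof.
rewrite mem_seq_mset => /mapP[u].
by rewrite mem_filter mem_enum andbT; exists u.
Qed.

Lemma tile_at_gt1 v u w : e v u -> e v w -> u != w -> lam v u = lam v w ->
  1 < tile_at e lam v (lam v u).
Proof.
move=> evu evw uw luw; rewrite tile_atE (bigD1 u) // (bigD1 w) 1?eq_sym //=.
by rewrite evu evw luw eqxx.
Qed.

Hypotheses (e_sym : symmetric e) (lamD : assembly_design e lam).

Lemma sum_tile_at_hat x : \sum_v tile_at e lam v x = \sum_v tile_at e lam v (hat x).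
Proof.
under eq_bigr do rewrite tile_atE; under [RHS]eq_bigr do rewrite tile_atE.
rewrite exchange_big; apply: eq_bigr => u _; apply: eq_bigr => v _.
rewrite e_sym; case evu: (e u v) => //=.
by rewrite (lamD evu) -[x in _ == x]hatK (can_eq hatK).
Qed.

Lemma hat_mem_tile_at v u : e v u -> hat (lam v u) \in tile_at e lam u.
Proof. by move=> evu; rewrite -lamD ?mem_tile_at // e_sym. Qed.

Lemma corner_path_contra c u w c' a :
  e c u -> e u w -> e w c' -> c != w -> u != c' ->
  {subset tile_at e lam c <= [:: a]} -> {subset tile_at e lam c' <= [:: a]} ->
  tile_at e lam u = tile_at e lam w -> tile_at e lam u (hat a) = 1 ->
  {subset tile_at e lam u <= [:: a; hat a]} -> False.
Proof.
(* The middle edge carries [hat a] at one of its ends, which then sees [hat a] twice. *)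
move=> ecu euw ewc' cw uc' ca c'a uw ua1 uaa.
have luc : lam u c = hat a.
  by rewrite (lamD ecu); have := ca _ (mem_tile_at ecu); rewrite inE => /eqP->.
have lwc' : lam w c' = hat a.
  have ec'w : e c' w by rewrite e_sym.
  by rewrite (lamD ec'w); have := c'a _ (mem_tile_at ec'w); rewrite inE => /eqP->.
have := uaa _ (mem_tile_at euw); rewrite !inE => /orP[] /eqP luw.
  have ewu : e w u by rewrite e_sym.
  have lwu : lam w u = lam w c' by rewrite (lamD euw) luw lwc'.
  by have := tile_at_gt1 ewu ewc' uc' lwu; rewrite -uw lwu lwc' ua1.
have ecu' : e u c by rewrite e_sym.
have luw' : lam u c = lam u w by rewrite luc luw.
by have := tile_at_gt1 ecu' euw cw luw'; rewrite luc ua1.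
Qed.

End AssemblyDesign.

Lemma sum_type_count (s : seq cet) (K : seq nat) :
  uniq K -> {subset [seq x.1 | x <- s] <= K} ->
  \sum_(k <- K) (count_mem (k, false) s + count_mem (k, true) s) = size s.
Proof.
move=> uK; elim: s => [|y s IHs] sK; first by rewrite big1.
have yK : y.1 \in K by apply: sK; rewrite inE eqxx.
rewrite (eq_bigr (fun k => (k == y.1) + (count_mem (k, false) s + count_mem (k, true) s))).
  rewrite big_split /= IHs => [|z zs]; last by apply: sK; rewrite inE zs orbT.
  by rewrite -big_mkcond /= sum1_count count_uniq_mem ?yK.
by case: y {sK yK} => j [] k _ /=; rewrite !xpair_eqE /= ?andbT ?andbF (eq_sym j);
  case: (k == j); lia.
Qed.

Lemma tile_type_sum (t : tile) (K : seq nat) :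
  uniq K -> {subset [seq x.1 | x <- t] <= K} ->
  \sum_(k <- K) (t (k, false) + t (k, true)) = size t.
Proof. by under eq_bigr do rewrite -!count_mem_mset; exact: sum_type_count. Qed.

Lemma count_hat_pair (t : tile) a : count (mem [:: a; hat a]) t = t a + t (hat a).
Proof.
rewrite -!count_mem_mset -count_predUI (@eq_count _ (predI _ _) pred0) ?count_pred0 ?addn0.
  by apply: eq_count => y; rewrite !inE.
by move=> y /=; case: eqP => // ->; rewrite eq_sym (negbTE (hat_neq a)).
Qed.

Lemma tile_hat_le_size (t : tile) a : t a + t (hat a) <= size t.
Proof. by rewrite -count_hat_pair count_size. Qed.

Lemma tile_hat_eq_size (t : tile) a :
  t a + t (hat a) = size t -> {subset t <= [:: a; hat a]}.
Proof. by rewrite -count_hat_pair => /eqP; rewrite -all_count => /allP. Qed.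

(* In terms of the inner dimensions (p, q) = (m - 2, n - 2): the grids 3 x 3, 3 x 5 and 4 x 4. *)
Definition exceptional (p q : nat) : bool :=
  (p, q) \in [:: (1, 1); (1, 3); (3, 1); (2, 2)].

Section Imbalance.
Local Open Scope ring_scope.

Definition imbalance (t : tile) (x : cet) : int := (t x)%:Z - (t (hat x))%:Z.

Lemma imbalance_hat t x : imbalance t (hat x) = - imbalance t x.
Proof. by rewrite /imbalance hatK opprB. Qed.

Definition hat_pairs (t : tile) (K : seq nat) : nat :=
  \sum_(k <- K) minn (t (k, false)) (t (k, true)).

Definition imbalance_norm (t : tile) (K : seq nat) : nat :=
  \sum_(k <- K) `|imbalance t (k, false)|.

Lemma imbalance_normE (t : tile) (K : seq nat) :
  uniq K -> {subset [seq x.1 | x <- t] <= K} ->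
  (imbalance_norm t K + 2 * hat_pairs t K = size t)%N.
Proof.
move=> uK tK; rewrite -(tile_type_sum uK tK) /imbalance_norm /hat_pairs.
rewrite big_distrr -big_split /=.
by apply: eq_bigr => k _; rewrite /imbalance /hat /=; lia.
Qed.

Lemma hat_pairs_gt0 (t : tile) (K : seq nat) x : uniq K -> x.1 \in K ->
  x \in t -> hat x \in t -> (0 < hat_pairs t K)%N.
Proof.
move=> uK xK xt hxt; rewrite /hat_pairs (bigD1_seq x.1) //= ltn_addr // leq_min.
by case: x {xK} xt hxt => k [] /=; rewrite !in_mset => -> ->.
Qed.

(* a0 and e0 are the imbalances of t2 and t4 on the bond type where t3 has imbalance 1, and A and E
   their total imbalances on the other bond types. *)
Lemma imbalance_arith (p q : nat) (a0 e0 : int) (A E : nat) :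
  (0 < p)%N -> (0 < q)%N -> ~~ exceptional p q ->
  (`|a0|%N + A \in [:: 0; 2])%N -> (`|e0|%N + E \in [:: 0; 2])%N ->
  (4 * A = p * q * E)%N ->
  4 * a0 + 2 * (p + q)%:R + (p * q)%:R * e0 = 0 ->
  a0 = 2 /\ (p == 2%N) || (q == 2%N).
Proof.
rewrite /exceptional !inE !xpair_eqE => p_gt0 q_gt0 not_exc a0A e0E AE Eq.
have [E0 | E_gt0] := posnP E; last first.
  have : (E = 1 /\ `|e0| = 1)%N \/ (E = 2 /\ e0 = 0)%N by lia.
  by case=> [[E1 e01] | [E2 e00]]; nia.
have A0 : A = 0%N by move: AE; rewrite E0 muln0; lia.
have : e0 = -2 \/ e0 = 0 \/ e0 = 2 by lia.
case=> [|[|]] ?; subst e0; [|lia|nia].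
clear AE; move: p_gt0 q_gt0 Eq not_exc; case: p q => [|x] [|y] // _ _ Eq not_exc.
have xy_eq : (x * y)%:R = 2 * a0 + 1 :> int by nia.
have : a0 = -2 \/ a0 = 0 \/ a0 = 2 by lia.
case=> [|[|]] ?; subst a0; first lia.
  have : (x * y == 1)%N by apply/eqP; lia.
  by rewrite muln_eq1 => /andP[/eqP x1 /eqP y1]; subst.
split=> //.
have : x \in divisors 5 by rewrite -dvdn_divisors // (_ : 5 = x * y)%N ?dvdn_mulr //; lia.
by rewrite !inE => /orP[/eqP-> // | /eqP x5]; move: xy_eq; rewrite x5; lia.
Qed.

Lemma imbalance_family_arith (T : eqType) (K : seq T) (a c e : T -> int) (p q : nat) :
  (0 < p)%N -> (0 < q)%N -> ~~ exceptional p q -> uniq K ->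
  {in K, forall k, 4 * a k + 2 * (p + q)%:R * c k + (p * q)%:R * e k = 0} ->
  (\sum_(k <- K) `|a k| \in [:: 0; 2])%N ->
  (\sum_(k <- K) `|c k| = 1)%N ->
  (\sum_(k <- K) `|e k| \in [:: 0; 2])%N ->
  exists2 k, k \in K & [/\ `|c k|%N = 1%N, a k = 2 * c k & (p == 2%N) || (q == 2%N)].
Proof.
move=> p_gt0 q_gt0 not_exc uK bal a_norm c_norm e_norm.
have [k0 k0K ck0_neq0] : exists2 k0, k0 \in K & c k0 != 0.
  apply/hasP; apply: contra_eqT c_norm => /hasPn c0.
  by rewrite big1_seq // => k /andP[_ /c0]; rewrite negbK => /eqP ->.
move: a_norm c_norm e_norm; rewrite !(bigD1_seq k0) //= => a_norm c_norm e_norm.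
have ck0_1 : `|c k0|%N = 1%N by lia.
have c_other : forall k, k \in K -> k != k0 -> c k = 0.
  have : (\sum_(k <- K | k != k0) `|c k| == 0)%N by apply/eqP; lia.
  rewrite sum_nat_seq_eq0 => /allP c0 k kK kk0.
  by move: (c0 k kK) => /=; rewrite kk0 absz_eq0 => /eqP.
have other_balance : (4 * \sum_(k <- K | k != k0) `|a k| =
                      p * q * \sum_(k <- K | k != k0) `|e k|)%N.
  rewrite !big_distrr big_seq_cond [RHS]big_seq_cond; apply: eq_bigr => k /andP[kK kk0] /=.
  have := bal k kK; rewrite c_other // mulr0 addr0 => /eqP; rewrite addr_eq0 => /eqP ak.
  by have := congr1 absz ak; rewrite abszN !abszM !natz.
have sq1 : c k0 * c k0 = 1 by case: (c k0) ck0_1 => [[|[]]|[]].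
have [a0_2 p2q2] : c k0 * a k0 = 2 /\ (p == 2%N) || (q == 2%N).
  apply: (@imbalance_arith p q _ (c k0 * e k0) _ _ p_gt0 q_gt0 not_exc _ _ other_balance);
    rewrite ?abszM ?ck0_1 ?mul1n //.
  have -> : 2 * (p + q)%:R = 2 * (p + q)%:R * (c k0 * c k0) :> int by rewrite sq1 mulr1.
  by rewrite -(mulr0 (c k0)) -(bal k0 k0K); ring.
exists k0 => //; split=> //.
by rewrite -a0_2 mulrC mulrA sq1 mul1r.
Qed.

Lemma three_tile_imbalance (p q : nat) (t2 t3 t4 : tile) :
  (0 < p)%N -> (0 < q)%N -> ~~ exceptional p q ->
  size t2 = 2%N -> size t3 = 3%N -> size t4 = 4%N ->
  (exists x, x \in t3 /\ hat x \in t3) -> (exists x, x \in t4 /\ hat x \in t4) ->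
  (forall x, 4 * imbalance t2 x + 2 * (p + q)%:R * imbalance t3 x
             + (p * q)%:R * imbalance t4 x = 0) ->
  exists x, [/\ imbalance t2 x = 2, imbalance t3 x = 1 & (p == 2%N) || (q == 2%N)].
Proof.
move=> p_gt0 q_gt0 not_exc s2 s3 s4 [x3 [x3t hx3t]] [x4 [x4t hx4t]] bal.
pose K := undup [seq x.1 | x <- t2 ++ t3 ++ t4].
have uK : uniq K := undup_uniq _.
have sub_K (t : tile) : {subset t <= t2 ++ t3 ++ t4} -> {subset [seq x.1 | x <- t] <= K}.
  by move=> tsub _ /mapP[x xt ->]; rewrite mem_undup map_f ?tsub.
have K2 : {subset [seq x.1 | x <- t2] <= K} by apply: sub_K => x xt; rewrite mem_cat xt.
have K3 : {subset [seq x.1 | x <- t3] <= K} by apply: sub_K => x xt; rewrite !mem_cat xt orbT.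
have K4 : {subset [seq x.1 | x <- t4] <= K} by apply: sub_K => x xt; rewrite !mem_cat xt !orbT.
have := imbalance_normE uK K2; have := imbalance_normE uK K3; have := imbalance_normE uK K4.
have := hat_pairs_gt0 uK (K3 _ (map_f _ x3t)) x3t hx3t.
have := hat_pairs_gt0 uK (K4 _ (map_f _ x4t)) x4t hx4t.
rewrite s2 s3 s4 => m4 m3 n4 n3 n2.
have a1 : (imbalance_norm t2 K \in [:: 0; 2])%N by rewrite !inE; lia.
have c1 : imbalance_norm t3 K = 1%N by lia.
have e1 : (imbalance_norm t4 K \in [:: 0; 2])%N by rewrite !inE; lia.
have [k _ [ck1 ak p2q2]] := @imbalance_family_arith _ K (fun k => imbalance t2 (k, false))
  (fun k => imbalance t3 (k, false)) (fun k => imbalance t4 (k, false)) p q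
  p_gt0 q_gt0 not_exc uK (fun k _ => bal (k, false)) a1 c1 e1.
have [ck | ck] : imbalance t3 (k, false) = 1 \/ imbalance t3 (k, false) = -1 by lia.
  by exists (k, false); rewrite ak ck.
by exists (hat (k, false)); rewrite !imbalance_hat ak ck.
Qed.

End Imbalance.

Definition cdeg (n i : nat) : nat := (0 < i) + (i <= n).

Lemma sum_cdeg n (F : nat -> nat) : \sum_(i < n.+2) F (cdeg n i) = 2 * F 1 + n * F 2.
Proof.
rewrite big_ord_recl big_ord_recr /= (eq_bigr (fun _ => F 2)) => [|i _]; last first.
  by rewrite /cdeg /bump /= add1n ltn_ord.
by rewrite big_const_ord iter_addn_0 /cdeg /= ltnn add0n addn0; lia.
Qed.

Section Grid.
Variables p q : nat.

Local Notation vertex := ('I_p.+2 * 'I_q.+2)%type.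
Local Notation grid := (@grid_adj p.+2 q.+2).

Definition pt (i j : nat) : vertex := (inord i, inord j).

Lemma pt1 i j : i <= p.+1 -> (pt i j).1 = i :> nat.
Proof. by move=> ip; rewrite /= inordK. Qed.

Lemma pt2 i j : j <= q.+1 -> (pt i j).2 = j :> nat.
Proof. by move=> jq; rewrite /= inordK. Qed.

Lemma ptE (v : vertex) : pt v.1 v.2 = v.
Proof. by case: v => i j; rewrite /pt !inord_val. Qed.

Definition nat_adj (i j k l : nat) : bool :=
  ((i == k) && ((j.+1 == l) || (l.+1 == j))) || ((j == l) && ((i.+1 == k) || (k.+1 == i))).

Lemma gridE (v u : vertex) : grid v u = nat_adj v.1 v.2 u.1 u.2.
Proof. by []. Qed.

Lemma grid_sym : symmetric grid.
Proof. by move=> v u; rewrite !gridE /nat_adj; lia. Qed.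

Lemma grid_pt i j k l : i <= p.+1 -> j <= q.+1 -> k <= p.+1 -> l <= q.+1 ->
  grid (pt i j) (pt k l) = nat_adj i j k l.
Proof. by move=> *; rewrite gridE !pt1 ?pt2. Qed.

Lemma eq_pt i j k l : i <= p.+1 -> j <= q.+1 -> k <= p.+1 -> l <= q.+1 ->
  (pt i j == pt k l) = (i == k) && (j == l).
Proof. by move=> *; rewrite xpair_eqE -!val_eqE /= !inordK. Qed.

Definition deg (i j : nat) : nat := cdeg p i + cdeg q j.

Definition nbrs (i j : nat) : seq (nat * nat) :=
  (if 0 < i then [:: (i.-1, j)] else [::]) ++ (if i <= p then [:: (i.+1, j)] else [::]) ++
  (if 0 < j then [:: (i, j.-1)] else [::]) ++ (if j <= q then [:: (i, j.+1)] else [::]).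

Lemma nbrsP i j c : i <= p.+1 -> j <= q.+1 -> c \in nbrs i j ->
  [/\ c.1 <= p.+1, c.2 <= q.+1 & nat_adj i j c.1 c.2].
Proof.
move=> ip jq; suff /allP/(_ c) nbrs_ok : all (fun c =>
    [&& c.1 <= p.+1, c.2 <= q.+1 & nat_adj i j c.1 c.2]) (nbrs i j) by move/nbrs_ok/and3P.
by rewrite /nbrs /nat_adj; do 4 case: ifP => ? /=; lia.
Qed.

Lemma perm_tile_at_grid (lam : vertex -> vertex -> cet) (v : vertex) :
  perm_eq [seq lam v u | u <- enum {: vertex} & grid v u]
          [seq lam v (pt c.1 c.2) | c <- nbrs v.1 v.2].
Proof.
have ip : v.1 <= p.+1 by rewrite -ltnS.
have jq : v.2 <= q.+1 by rewrite -ltnS.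
rewrite (map_comp (lam v) (fun c => pt c.1 c.2)); apply: perm_map; apply: uniq_perm.
- by rewrite filter_uniq ?enum_uniq.
- rewrite map_inj_in_uniq => [|c d /(nbrsP ip jq) [c1 c2 _] /(nbrsP ip jq) [d1 d2 _]].
    by rewrite /nbrs; do 4 case: ifP => ? /=; rewrite ?inE ?xpair_eqE; lia.
  move/eqP; rewrite eq_pt // => /andP[/eqP c1d1 /eqP c2d2].
  by case: c d {c1 c2 d1 d2} c1d1 c2d2 => ? ? [? ?] /= -> ->.
move=> u; rewrite mem_filter mem_enum andbT; apply/idP/mapP => [vu | [c cn ->]].
  exists (u.1 : nat, u.2 : nat); last by rewrite ptE.
  have := ltn_ord u.1; have := ltn_ord u.2; move: vu; rewrite gridE /nat_adj /nbrs.
  by do 4 case: ifP => ? /=; rewrite ?mem_cat ?inE ?xpair_eqE; lia.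
by have [c1 c2 vc] := nbrsP ip jq cn; rewrite -[v]ptE grid_pt.
Qed.

Lemma tile_at_grid (lam : vertex -> vertex -> cet) (v : vertex) :
  tile_at grid lam v = seq_mset [seq lam v (pt c.1 c.2) | c <- nbrs v.1 v.2].
Proof. exact/eq_seq_msetP/perm_tile_at_grid. Qed.

Lemma size_tile_at_grid (lam : vertex -> vertex -> cet) (v : vertex) :
  size (tile_at grid lam v) = deg v.1 v.2.
Proof.
rewrite tile_at_grid (perm_size (perm_eq_seq_mset _)) size_map /nbrs /deg /cdeg.
by do 4 case: ifP => ? /=; lia.
Qed.

Lemma sum_deg (f : nat -> nat) :
  \sum_(v : vertex) f (deg v.1 v.2) = 4 * f 2 + 2 * (p + q) * f 3 + p * q * f 4.
Proof.
rewrite -(pair_big xpredT xpredT (fun (i : 'I_p.+2) (j : 'I_q.+2) => f (deg i j))) /=.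
under eq_bigr => i _ do rewrite (sum_cdeg q (fun d => f (cdeg p i + d))).
by rewrite (sum_cdeg p (fun d => 2 * f (d + 1) + q * f (d + 2))) !addn1 !addn2; lia.
Qed.

End Grid.

Definition corner_tile : seq cet := [:: (0, false); (0, true)].
Definition side_tile (b : bool) : seq cet := [:: (0, false); (0, true); (1, b)].
Definition inner_tile : seq cet := [:: (1, false); (1, false); (1, true); (1, true)].
Definition grid_tiles : seq (seq cet) :=
  [:: corner_tile; side_tile false; side_tile true; inner_tile].
Definition grid_pot : {fset tile} := [fset seq_mset s | s in grid_tiles]%fset.

Lemma grid_pot_card : #|` grid_pot| = 4.
Proof.
rewrite card_in_imfset => [|s t]; first by [].
rewrite !inE => /or4P[]/eqP-> /or4P[]/eqP-> /eq_seq_msetP //.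
Qed.

Lemma grid_pot_is_pot : is_pot grid_pot.
Proof.
move=> _ /imfsetP[s sT ->] [k b]; rewrite mem_seq_mset => xs.
have : k <= 1.
  have /allP/(_ (k, b)) := (isT : all (fun y : cet => y.1 <= 1) (flatten grid_tiles)).
  by apply; apply/flattenP; exists s.
rewrite leq_eqVlt ltnS leqn0 => /orP[] /eqP->.
  exists (seq_mset inner_tile); first by apply/imfsetP; exists inner_tile.
  by rewrite mem_seq_mset; case: (b).
exists (seq_mset corner_tile); first by apply/imfsetP; exists corner_tile.
by rewrite mem_seq_mset; case: (b).
Qed.

Section GridDesign.
Variables p q : nat.

Definition on_boundary (i j : nat) : bool := [|| i == 0, i == p.+1, j == 0 | j == q.+1].

(* Edges point down or right, except that the first row points left and the last column points
   up, which turns the boundary into a directed cycle. *)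
Definition points_to (i j k l : nat) : bool :=
  if j == l then (if j == q.+1 then k < i else i < k) else (if i == 0 then l < j else j < l).

Definition grid_label (i j k l : nat) : cet :=
  (if on_boundary i j && on_boundary k l then 0 else 1, ~~ points_to i j k l).

Definition grid_design (v u : 'I_p.+2 * 'I_q.+2) : cet := grid_label v.1 v.2 u.1 u.2.

Lemma grid_design_assembly : assembly_design (@grid_adj p.+2 q.+2) grid_design.
Proof.
move=> u v; rewrite gridE /nat_adj /grid_design /grid_label /hat /= => uv.
rewrite andbC negbK; congr pair; rewrite /points_to; move: uv; do 4 case: ifP => ? /=; lia.
Qed.

Ltac decide_nat_tests :=
  repeat (match goal with
  | |- context [?a == ?b :> nat] =>
      first [ rewrite (_ : (a == b) = true); last by lia
            | rewrite (_ : (a == b) = false); last by lia ]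
  | |- context [?a <= ?b] =>
      first [ rewrite (_ : (a <= b) = true); last by lia
            | rewrite (_ : (a <= b) = false); last by lia ]
  end; rewrite /= ?orbT ?orbF ?andbT ?andbF).

Lemma grid_labels i j : 0 < p -> 0 < q -> i <= p.+1 -> j <= q.+1 ->
  has (perm_eq [seq grid_label i j c.1 c.2 | c <- nbrs p q i j]) grid_tiles.
Proof.
move=> p_gt0 q_gt0 ip jq; rewrite /nbrs.
have [->|i0] := eqVneq i 0; [|have [->|ip1] := eqVneq i p.+1];
(have [->|j0] := eqVneq j 0; [|have [->|jq1] := eqVneq j q.+1]);
by rewrite /grid_label /on_boundary /points_to; decide_nat_tests.
Qed.

Lemma grid_design_tile (v : 'I_p.+2 * 'I_q.+2) : 0 < p -> 0 < q ->
  tile_at (@grid_adj p.+2 q.+2) grid_design v \in grid_pot.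
Proof.
move=> p_gt0 q_gt0; have ip : v.1 <= p.+1 by rewrite -ltnS.
have jq : v.2 <= q.+1 by rewrite -ltnS.
rewrite tile_at_grid.
have -> : [seq grid_design v (pt p q c.1 c.2) | c <- nbrs p q v.1 v.2] =
          [seq grid_label v.1 v.2 c.1 c.2 | c <- nbrs p q v.1 v.2].
  by apply/eq_in_map => c /(nbrsP ip jq)[c1 c2 _]; rewrite /grid_design pt1 ?pt2.
have /hasP[s sT /eq_seq_msetP->] := grid_labels p_gt0 q_gt0 ip jq.
by apply/imfsetP; exists s.
Qed.

Lemma grid_upper : 0 < p -> 0 < q ->
  exists P, [/\ is_pot P, realizes (@grid_adj p.+2 q.+2) P & #|` P| = 4].
Proof.
move=> p_gt0 q_gt0; exists grid_pot; split; [exact: grid_pot_is_pot | | exact: grid_pot_card].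
by exists grid_design; split=> [|v]; [exact: grid_design_assembly | exact: grid_design_tile].
Qed.

End GridDesign.

Lemma tile_size_inj (P : {fset tile}) (t2 t3 t4 : tile) : #|` P| <= 3 ->
  t2 \in P -> t3 \in P -> t4 \in P -> size t2 = 2 -> size t3 = 3 -> size t4 = 4 ->
  {in P &, injective (fun t : tile => size t)}.
Proof.
move=> P3 t2P t3P t4P s2 s3 s4; apply/card_in_imfsetP; rewrite eqn_leq leq_imfset_card.
apply: leq_trans P3 (uniq_leq_size (isT : uniq [:: 2; 3; 4]) _) => k.
by rewrite !inE => /or3P[] /eqP->; apply/imfsetP; [exists t2 | exists t3 | exists t4].
Qed.

Section GridLowerBound.
Variables (p q : nat) (P : {fset tile}) (lam : 'I_p.+2 * 'I_q.+2 -> 'I_p.+2 * 'I_q.+2 -> cet).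
Hypotheses (p_gt0 : 0 < p) (q_gt0 : 0 < q) (small_pot : #|` P| <= 3).
Hypotheses (lamD : assembly_design (@grid_adj p.+2 q.+2) lam)
           (lamP : forall v, tile_at (@grid_adj p.+2 q.+2) lam v \in P).

Local Notation vertex := ('I_p.+2 * 'I_q.+2)%type.
Local Notation grid := (@grid_adj p.+2 q.+2).
Local Notation tile_of v := (tile_at grid lam v).
Local Notation vdeg v := (deg p q v.1 v.2).
Local Notation t2 := (tile_of (pt p q 0 0)).
Local Notation t3 := (tile_of (pt p q 1 0)).
Local Notation t4 := (tile_of (pt p q 1 1)).

Lemma deg_pt i j : i <= p.+1 -> j <= q.+1 -> vdeg (pt p q i j) = deg p q i j.
Proof. by move=> ip jq; rewrite pt1 ?pt2. Qed.

Lemma tile_of_deg (u v : vertex) : vdeg u = vdeg v -> tile_of u = tile_of v.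
Proof.
move=> duv; apply: (tile_size_inj small_pot (lamP (pt p q 0 0)) (lamP (pt p q 1 0))
  (lamP (pt p q 1 1)) _ _ _ (lamP u) (lamP v)); rewrite !size_tile_at_grid ?duv //.
all: by rewrite deg_pt // /deg /cdeg; lia.
Qed.

Lemma tile_ofE (v : vertex) :
  tile_of v = if vdeg v == 2 then t2 else if vdeg v == 3 then t3 else t4.
Proof.
have d24 : 2 <= vdeg v <= 4 by rewrite /deg /cdeg; lia.
case: ifP => [/eqP d | /eqP d2]; last case: ifP => [/eqP d | /eqP d3].
- by apply: tile_of_deg; rewrite d deg_pt // /deg /cdeg; lia.
- by apply: tile_of_deg; rewrite d deg_pt // /deg /cdeg; lia.
by apply: tile_of_deg; rewrite deg_pt //; move: d24 d2 d3; rewrite /deg /cdeg; lia.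
Qed.

Lemma tile_of_sum y :
  \sum_(v : vertex) tile_of v y = 4 * t2 y + 2 * (p + q) * t3 y + p * q * t4 y.
Proof.
under eq_bigr do rewrite tile_ofE.
exact: (sum_deg p q (fun d => (if d == 2 then t2 else if d == 3 then t3 else t4) y)).
Qed.

Lemma grid_tile_balance x : (4 * imbalance t2 x + 2 * (p + q)%:R * imbalance t3 x
                             + (p * q)%:R * imbalance t4 x = 0)%R.
Proof.
by have := sum_tile_at_hat (@grid_sym p q) lamD x; rewrite !tile_of_sum /imbalance; lia.
Qed.

Lemma corner_hat x : x \in t2 -> hat x \in t3.
Proof.
case/tile_atP => u cu ->; rewrite -(@tile_of_deg u).
  exact: (hat_mem_tile_at (@grid_sym p q) lamD cu).
have := ltn_ord u.1; have := ltn_ord u.2.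
by move: cu; rewrite gridE !pt1 ?pt2 // /nat_adj /deg /cdeg; lia.
Qed.

Lemma hat_pair_of_edge (u w r : vertex) : grid u w -> vdeg u = vdeg r -> vdeg w = vdeg r ->
  exists x, x \in tile_of r /\ hat x \in tile_of r.
Proof.
move=> uw ur wr; exists (lam u w); rewrite -(tile_of_deg ur) mem_tile_at //.
rewrite (tile_of_deg ur) -(tile_of_deg wr); split=> //.
exact: (hat_mem_tile_at (@grid_sym p q) lamD uw).
Qed.

Lemma side_hat_pair : (2 <= p) || (2 <= q) -> exists x, x \in t3 /\ hat x \in t3.
Proof.
case/orP=> [p2 | q2]; [apply: (@hat_pair_of_edge (pt p q 1 0) (pt p q 2 0))
                      | apply: (@hat_pair_of_edge (pt p q 0 1) (pt p q 0 2))];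
  by rewrite ?grid_pt ?deg_pt // /deg /cdeg; lia.
Qed.

Lemma inner_hat_pair : (2 <= p) || (2 <= q) -> exists x, x \in t4 /\ hat x \in t4.
Proof.
case/orP=> [p2 | q2]; [apply: (@hat_pair_of_edge (pt p q 1 1) (pt p q 2 1))
                      | apply: (@hat_pair_of_edge (pt p q 1 1) (pt p q 1 2))];
  by rewrite ?grid_pt ?deg_pt // /deg /cdeg; lia.
Qed.

Lemma size_t2 : size t2 = 2.
Proof. by rewrite size_tile_at_grid deg_pt // /deg /cdeg; lia. Qed.

Lemma size_t3 : size t3 = 3.
Proof. by rewrite size_tile_at_grid deg_pt // /deg /cdeg; lia. Qed.

Lemma size_t4 : size t4 = 4.
Proof. by rewrite size_tile_at_grid deg_pt // /deg /cdeg; lia. Qed.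

Lemma corner_path_at (c u w c' : vertex) a :
  grid c u -> grid u w -> grid w c' -> c != w -> u != c' ->
  vdeg c = 2 -> vdeg c' = 2 -> vdeg u = 3 -> vdeg w = 3 ->
  t2 a = 2 -> t3 a = 2 -> t3 (hat a) = 1 -> False.
Proof.
move=> cu uw wc' cw uc' dc dc' du dw t2a t3a t3ha.
have t2_a : {subset t2 <= [:: a]}.
  have t2ha : t2 (hat a) = 0 by have := tile_hat_le_size t2 a; rewrite size_t2 t2a; lia.
  have t2_sum : t2 a + t2 (hat a) = size t2 by rewrite size_t2 t2a t2ha.
  move=> y yt2; have := tile_hat_eq_size t2_sum yt2; rewrite !inE => /orP[-> // | /eqP yha].
  by rewrite yha in_mset t2ha in yt2.
have t3_aha : {subset t3 <= [:: a; hat a]}.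
  by apply: tile_hat_eq_size; rewrite size_t3 t3a t3ha.
apply: (corner_path_contra (@grid_sym p q) lamD cu uw wc' cw uc' (a := a)).
- by rewrite (tile_ofE c) dc.
- by rewrite (tile_ofE c') dc'.
- by rewrite (tile_ofE u) (tile_ofE w) du dw.
- by rewrite (tile_ofE u) du.
by rewrite (tile_ofE u) du.
Qed.

Lemma small_pot_contra : ~~ exceptional p q -> False.
Proof.
move=> not_exc.
have big : (2 <= p) || (2 <= q) by move: not_exc; rewrite /exceptional !inE !xpair_eqE; lia.
have [a [t2a t3a p2q2]] := three_tile_imbalance p_gt0 q_gt0 not_exc size_t2 size_t3 size_t4
  (side_hat_pair big) (inner_hat_pair big) grid_tile_balance.
have := tile_hat_le_size t2 a; have := tile_hat_le_size t3 a.
rewrite size_t2 size_t3; move: t2a t3a; rewrite /imbalance => t2a t3a le3 le2.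
have /corner_hat : a \in t2 by rewrite in_mset; lia.
rewrite in_mset => t3ha_pos.
have t2a2 : t2 a = 2 by lia.
have t3a2 : t3 a = 2 by lia.
have t3ha1 : t3 (hat a) = 1 by lia.
case/orP: p2q2 => /eqP pq2.
  apply: (@corner_path_at (pt p q 0 0) (pt p q 1 0) (pt p q 2 0) (pt p q 3 0) a);
  by rewrite ?grid_pt ?eq_pt ?deg_pt // /nat_adj /deg /cdeg; lia.
apply: (@corner_path_at (pt p q 0 0) (pt p q 0 1) (pt p q 0 2) (pt p q 0 3) a);
by rewrite ?grid_pt ?eq_pt ?deg_pt // /nat_adj /deg /cdeg; lia.
Qed.

End GridLowerBound.

Lemma grid_lower (p q : nat) (P : {fset tile}) : 0 < p -> 0 < q -> ~~ exceptional p q ->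
  realizes (@grid_adj p.+2 q.+2) P -> 4 <= #|` P|.
Proof.
move=> p_gt0 q_gt0 not_exc [lam [lamD lamP]]; rewrite leqNgt; apply/negP => small.
exact: (small_pot_contra p_gt0 q_gt0 small lamD lamP not_exc).
Qed.

Theorem proposition5 (m n : nat) :
  2 < m -> 2 < n ->
  ~ ((m == 3) && (n == 3)) -> ~ ((m == 3) && (n == 5)) -> ~ ((m == 5) && (n == 3)) ->
  ~ ((m == 4) && (n == 4)) ->
  T1_eq (@grid_adj m n) 4.
Proof.
case: m n => [|[|p]] [|[|q]] // p_gt0 q_gt0 h33 h35 h53 h44.
have not_exc : ~~ exceptional p q.
  by apply/negP; rewrite /exceptional !inE !xpair_eqE => exc; lia.
split=> [|P _]; first exact: grid_upper.
exact: grid_lower.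
Qed.
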